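(* Let $X\subseteq A^{\mathbb{N}}$ be a (one-sided) sofic shift over a finite alphabet $A$. Then the winning shift $W(X)\subseteq\{0,\dots,|A|-1\}^{\mathbb{N}}$ is weakly $1$-codable; if moreover $X$ is countable, then $W(X)$ is $1$-codable.
   Context: A sofic shift is the set of labels of right-infinite paths in a finite edge-labeled graph. Winning shift: for $X\subseteq A^{\mathbb{N}}$ and a choice sequence $\alpha=\alpha_0\alpha_1\cdots\in\{0,\dots,|A|-1\}^{\mathbb{N}}$, Alice and Bob play infinitely many rounds; in round $j$ Alice chooses $A_j\subseteq A$ with $|A_j|=\alpha_j+1$ and Bob chooses $a_j\in A_j$; Alice wins if $a_0a_1\cdots\in X$. $W(X)$ is the set of $\alpha$ for which Alice has a winning strategy. The ANS with language $0^*$ and radix order has $\mathrm{rep}(n)=0^n$; tuples are represented by left-padding with a new symbol $\#$; $Y\subseteq\mathbb{N}^d$ is $1$-recognizable if $\mathrm{rep}(Y)$ is regular. For $\mathbf{y}\in\mathbb{N}^{\mathbb{N}}$: $\sum\mathbf{y}=\sum_iy_i$; if finite, $\nu(\mathbf{y})$ is the unique nondecreasing tuple $(n_1,\dots,n_d)$ with $y_j=|\{k:n_k=j\}|$. The coding dimension of $Y\subseteq\mathbb{N}^{\mathbb{N}}$ is the least $d$ bounding $\sum\mathbf{y}$ on $Y$, if it exists. $Y$ is weakly $1$-codable if for each $k$ the set $\{\nu(\mathbf{y}):\mathbf{y}\in Y,\sum\mathbf{y}\le k\}$ is $1$-recognizable in each dimension, and $1$-codable if moreover its coding dimension is finite (here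 $W(X)$ is viewed with zero symbol $0$). *)

From mathcomp Require Import all_boot.
Set Implicit Arguments. Unset Strict Implicit. Unset Printing Implicit Defensive.

Definition path_labels (A V : finType) (E : V -> A -> V -> bool)
    (x : nat -> A) : Prop :=
  exists v : nat -> V, forall i, E (v i) (x i) (v i.+1).

Definition sofic (A : finType) (X : (nat -> A) -> Prop) : Prop :=
  exists (V : finType) (E : V -> A -> V -> bool),
    forall x, X x <-> path_labels E x.

Definition prefix (A : Type) (x : nat -> A) (j : nat) : seq A :=
  [seq x i | i <- iota 0 j].

(* A strategy of Alice maps Bob's previous choices a_0..a_{j-1} to A_j. *)
Definition alice_wins (A : finType) (X : (nat -> A) -> Prop)
    (alpha : nat -> nat) : Prop :=
  exists s : seq A -> {set A},
    (forall h : seq A, #|s h| = (alpha (size h)).+1) /\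
    (forall x : nat -> A, (forall j, x j \in s (prefix x j)) -> X x).

Definition W (A : finType) (X : (nat -> A) -> Prop) (alpha : nat -> nat)
    : Prop :=
  (forall j, alpha j < #|A|) /\ alice_wins X alpha.

Definition regular (S : finType) (L : seq S -> Prop) : Prop :=
  exists (Q : finType) (q0 : Q) (delta : Q -> S -> Q) (F : {set Q}),
    forall w, L w <-> foldl delta q0 w \in F.

(* Representation of a d-tuple (n_1..n_d) in the ANS with language 0^*,
   left-padded with #.  A letter is a column {ffun 'I_d -> bool}, where
   true encodes the symbol 0 and false encodes the padding symbol #.
   The word has length m = max n_i; position p (0-based) of component i
   is 0 iff p >= m - n_i. *)
Definition rep (d : nat) (t : d.-tuple nat) : seq {ffun 'I_d -> bool} :=
  let m := \max_(i < d) tnth t i in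
  [seq [ffun i => m - tnth t i <= p] | p <- iota 0 m].

Definition one_recognizable (d : nat) (Y : d.-tuple nat -> Prop) : Prop :=
  regular (fun w => exists t, Y t /\ rep t = w).

(* sum y <= k  (sum in N u {oo}) *)
Definition sum_le (y : nat -> nat) (k : nat) : Prop :=
  forall n, \sum_(i < n) y i <= k.

Definition is_nu (y : nat -> nat) (d : nat) (t : d.-tuple nat) : Prop :=
  sorted leq t /\ forall j, y j = count_mem j t.

Definition weakly_1_codable (Y : (nat -> nat) -> Prop) : Prop :=
  forall k d : nat,
    one_recognizable
      (fun t : d.-tuple nat => exists y, Y y /\ sum_le y k /\ is_nu y t).

Definition finite_coding_dimension (Y : (nat -> nat) -> Prop) : Prop :=
  exists d, forall y, Y y -> sum_le y d.

Definition one_codable (Y : (nat -> nat) -> Prop) : Prop :=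
  weakly_1_codable Y /\ finite_coding_dimension Y.

Definition countable_set (T : Type) (X : T -> Prop) : Prop :=
  exists f : nat -> T, forall x, X x -> exists n, f n = x.

From mathcomp Require Import all_boot zify.
From Stdlib Require Import ClassicalEpsilon Classical_Prop.
Set Implicit Arguments. Unset Strict Implicit. Unset Printing Implicit Defensive.

(* Let X be presented by the finite labelled graph [E] on the vertices [V].
   A position of the game is summarised by the set of vertices at which a
   path labelled by Bob's moves so far can end (the subset construction
   [reach]); by König's lemma a word lies in X iff all these sets are
   nonempty.  Hence the game for a choice sequence vanishing from some round
   on is solved by a finite backward induction over sets of vertex sets
   ([win_sets], with [W_win_sets] and [win_sets_W]).

   Weak 1-codability: in the representation of nu(y) the sizes of the
   successive columns determine the multiplicities y_j, so a finite automaton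
   can validate the word and run the backward induction while reading it
   ([accepted_iff], [weakly_codable_sofic]).

   Finite coding dimension for countable X: if Alice wins although more than
   #|{set V}| rounds offer a genuine choice, a pigeonhole on reachable sets
   gives two consistent plays that branch apart and return to the same
   reachable set ([branching_from_choices]); concatenating the two loops
   freely yields continuum many points of X ([pumping_uncountable], via
   Cantor's diagonal argument).  Since every y_j is below |A|, this bounds
   sum y by |A| * #|{set V}| on W(X) ([finite_dimension_countable]). *)

Lemma prefixS (T : Type) (x : nat -> T) j :
  prefix x j.+1 = rcons (prefix x j) (x j).
Proof. exact: mkseqS. Qed.

Lemma size_prefix (T : Type) (x : nat -> T) j : size (prefix x j) = j.
Proof. exact: size_mkseq. Qed.

(* This is the pigeonhole core of König. *)
Lemma finite_uniform_witness (V : finType) (Q : V -> Prop)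
    (P : nat -> V -> Prop) :
  (forall n m v, n <= m -> P m v -> P n v) ->
  (forall n, exists v, Q v /\ P n v) -> exists v, Q v /\ forall n, P n v.
Proof.
move=> P_anti HP; apply: NNPP => none.
have fails v : Q v -> exists n, ~ P n v.
  move=> Qv; apply: NNPP => all_n; apply: none; exists v; split=> // n.
  by apply: NNPP => Pn; apply: all_n; exists n.
have bound (l : seq V) : exists N, forall v, v \in l -> Q v -> ~ P N v.
  elim: l => [|v l [N HN]]; first by exists 0.
  have [Qv|nQv] := classic (Q v); last first.
    by exists N => w; rewrite inE => /orP [/eqP -> //|]; exact: HN.
  have [n Hn] := fails v Qv; exists (maxn N n) => w.
  rewrite inE => /orP [/eqP -> | wl] Qw /P_anti PN.
    by apply: Hn; apply: PN; rewrite leq_maxr.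
  by apply: (HN w wl Qw); apply: PN; rewrite leq_maxl.
have [N HN] := bound (enum V); have [v [Qv Pv]] := HP N.
by apply: (HN v _ Qv Pv); rewrite mem_enum.
Qed.

Section ChainLimit.
Variables (T : Type) (a0 : T) (g : nat -> seq T).
Hypothesis g_ext : forall n, exists l, g n.+1 = g n ++ l.
Hypothesis g_size : forall n, n <= size (g n).

Definition chain_limit (j : nat) : T := nth a0 (g j.+1) j.

Lemma chain_ext n m : n <= m -> exists l, g m = g n ++ l.
Proof.
move=> /subnKC <-; elim: (m - n) => [|k [l IH]].
  by exists [::]; rewrite addn0 cats0.
rewrite addnS; have [l' ->] := g_ext (n + k).
by exists (l ++ l'); rewrite IH catA.
Qed.

Lemma nth_chain n m j :
  n <= m -> j < size (g n) -> nth a0 (g m) j = nth a0 (g n) j.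
Proof. by move=> /chain_ext [l ->] lt; rewrite nth_cat lt. Qed.

Lemma chain_limitE m j : j < size (g m) -> chain_limit j = nth a0 (g m) j.
Proof.
move=> lt; rewrite /chain_limit; have [le|lt_m] := leqP j.+1 m.
  by rewrite (nth_chain le) // g_size.
by rewrite (nth_chain (ltnW lt_m) lt).
Qed.

Lemma prefix_chain_limit m n :
  n <= size (g m) -> prefix chain_limit n = take n (g m).
Proof.
move=> le; apply: (@eq_from_nth _ a0).
  by rewrite size_prefix size_take_min (minn_idPl le).
move=> j; rewrite size_prefix => lt.
rewrite nth_take // nth_mkseq // (chain_limitE (m := m)) //.
exact: leq_trans lt le.
Qed.

End ChainLimit.

Section Unfold.
Variables (T : Type) (a0 : T) (h : seq T) (next : seq T -> T).

Definition unfold (n : nat) : seq T := iter n (fun l => rcons l (next l)) h.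
Definition unfold_word : nat -> T := chain_limit a0 unfold.

Lemma size_unfold n : size (unfold n) = size h + n.
Proof. by elim: n => [|n IH]; rewrite ?addn0 //= size_rcons IH addnS. Qed.

Let unfold_ext n : exists l, unfold n.+1 = unfold n ++ l.
Proof. by exists [:: next (unfold n)]; rewrite cats1. Qed.

Let unfold_size n : n <= size (unfold n).
Proof. by rewrite size_unfold leq_addl. Qed.

Lemma prefix_unfold_word n : prefix unfold_word (size h + n) = unfold n.
Proof.
by rewrite (@prefix_chain_limit _ a0 _ unfold_ext unfold_size n) ?size_unfold
  // take_oversize ?size_unfold.
Qed.

Lemma unfold_wordE j : size h <= j -> unfold_word j = next (prefix unfold_word j).
Proof.
move=> /subnKC <-; set n := j - size h.
rewrite prefix_unfold_word /unfold_word.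
rewrite (@chain_limitE _ a0 _ unfold_ext unfold_size n.+1) ?size_unfold ?addnS //=.
by rewrite nth_rcons size_unfold ltnn eqxx.
Qed.

End Unfold.

Lemma dependent_choice (T : Type) (P : nat -> T -> Prop)
    (R : nat -> T -> T -> Prop) :
  (exists v, P 0 v) -> (forall i v, P i v -> exists w, R i v w /\ P i.+1 w) ->
  exists p : nat -> T, forall i, R i (p i) (p i.+1).
Proof.
move=> [v0 P0] step.
pose choose i (g : {v | P i v}) :=
  constructive_indefinite_description _ (step i _ (svalP g)).
pose next i (g : {v | P i v}) : {w | P i.+1 w} :=
  exist _ (sval (choose i g)) (proj2 (svalP (choose i g))).
pose f := fix f i : {v | P i v} :=
  if i is i'.+1 then next i' (f i') else exist _ v0 P0.
by exists (fun i => sval (f i)) => i; exact: (proj1 (svalP (choose i (f i)))).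
Qed.

Section SubsetConstruction.
Variables (A V : finType) (E : V -> A -> V -> bool).

Definition succ_set (S : {set V}) (a : A) : {set V} :=
  [set w | [exists v in S, E v a w]].

Definition reach (h : seq A) : {set V} := foldl succ_set setT h.

Lemma succ_set0 a : succ_set set0 a = set0.
Proof. by apply/setP => w; rewrite !inE; apply/existsP => -[v]; rewrite inE. Qed.

Lemma reach_rcons h a : reach (rcons h a) = succ_set (reach h) a.
Proof. by rewrite /reach foldl_rcons. Qed.

Lemma reach_cat h l : reach (h ++ l) = foldl succ_set (reach h) l.
Proof. by rewrite /reach foldl_cat. Qed.

Lemma reach_take h n : reach h != set0 -> reach (take n h) != set0.
Proof.
rewrite -[in reach h](cat_take_drop n h) reach_cat; apply: contra_neq => ->.
by elim: (drop n h) => //= a l; rewrite succ_set0.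
Qed.

Definition path_upto (x : nat -> A) (p : nat -> V) (n : nat) : Prop :=
  forall i, i < n -> E (p i) (x i) (p i.+1).

Lemma reach_prefix x n w :
  w \in reach (prefix x n) <-> exists p, p n = w /\ path_upto x p n.
Proof.
elim: n w => [|n IH] w.
  by split=> [_|]; [exists (fun _ => w) | rewrite inE].
rewrite prefixS reach_rcons inE; split.
  move=> /exists_inP [v /IH [p [pn Hp]] Evw].
  exists (fun i => if i <= n then p i else w); split; first by rewrite ltnn.
  move=> i lt; have [lt_in|->] : i < n \/ i = n by lia.
    by rewrite ltnW // lt_in; apply: Hp.
  by rewrite leqnn ltnn pn.
move=> [p [<- Hp]]; apply/exists_inP; exists (p n); last exact: Hp.
by apply/IH; exists p; split=> // i lt; apply: Hp; apply: ltnW.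
Qed.

Definition path_from (x : nat -> A) (i n : nat) (v : V) : Prop :=
  exists p, p 0 = v /\ forall k, k < n -> E (p k) (x (i + k)) (p k.+1).

Lemma path_from_anti x i n m v : n <= m -> path_from x i m v -> path_from x i n v.
Proof.
by move=> le [p [p0 Hp]]; exists p; split=> // k lt; apply: Hp; apply: leq_trans le.
Qed.

Lemma konig x : (forall n, reach (prefix x n) != set0) -> path_labels E x.
Proof.
move=> Hx.
have start : exists v, True /\ forall n, path_from x 0 n v.
  apply: finite_uniform_witness => [n m v|n]; first exact: path_from_anti.
  have [w /reach_prefix [p [_ Hp]]] := set0Pn _ (Hx n).
  by exists (p 0); split=> //; exists p; split=> // k; rewrite add0n; apply: Hp.
have step i v : (forall n, path_from x i n v) ->
    exists w, E v (x i) w /\ forall n, path_from x i.+1 n w.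
  move=> Hv; apply: finite_uniform_witness => [n m w|n]; first exact: path_from_anti.
  have [p [p0 Hp]] := Hv n.+1.
  exists (p 1); split; first by rewrite -p0 -(addn0 i); apply: Hp.
  by exists (fun k => p k.+1); split=> // k lt; rewrite addSnnS; apply: Hp.
have [v0 [_ Hv0]] := start.
have [p Hp] := dependent_choice (P := fun i v => forall n, path_from x i n v)
  (R := fun i v w => E v (x i) w) (ex_intro _ v0 Hv0) step.
by exists p.
Qed.

End SubsetConstruction.

Section Plays.
Variables (A : finType) (s : seq A -> {set A}).

Definition consistent (h : seq A) : Prop :=
  forall h1 a h2, h = h1 ++ a :: h2 -> a \in s h1.

Definition follows (x : nat -> A) : Prop := forall j, x j \in s (prefix x j).

Lemma consistent_nil : consistent [::].
Proof. by case. Qed.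

Lemma consistent_rcons h a : consistent (rcons h a) <-> consistent h /\ a \in s h.
Proof.
split=> [Hc|[Hc ah] h1 b h2].
  split; last by apply: Hc [::] _; rewrite cats1.
  by move=> h1 b h2 e; apply: (Hc h1 b (rcons h2 a)); rewrite e rcons_cat.
case/lastP: h2 => [|h2 c]; first by rewrite cats1 => /rcons_inj [<- <-].
by rewrite -rcons_cons -rcons_cat => /rcons_inj [e _]; exact: Hc e.
Qed.

Lemma consistent_cat h1 h2 : consistent (h1 ++ h2) -> consistent h1.
Proof.
elim/last_ind: h2 => [|h2 a IH]; first by rewrite cats0.
by rewrite -rcons_cat => /consistent_rcons [/IH].
Qed.

Lemma follows_prefix x n : follows x -> consistent (prefix x n).
Proof.
move=> Hx; elim: n => [|n IH]; first exact: consistent_nil.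
by rewrite prefixS; apply/consistent_rcons.
Qed.

Lemma consistent_prefix x n j :
  consistent (prefix x n) -> j < n -> x j \in s (prefix x j).
Proof.
elim: n => [//|n IH]; rewrite prefixS => /consistent_rcons [Hc Hxn].
by rewrite ltnS leq_eqVlt => /predU1P [->|]; [|exact: IH].
Qed.

Lemma extend_play h :
  (forall h', 0 < #|s h'|) -> consistent h ->
  exists x, prefix x (size h) = h /\ follows x.
Proof.
move=> offers ch.
have [a0 _] : exists a0, a0 \in s [::] by apply/set0Pn; rewrite -card_gt0.
pose next l := odflt a0 [pick a in s l].
have nextP l : next l \in s l.
  by rewrite /next; case: pickP => //= none; move: (offers l); rewrite (eq_card0 none).
have hx : prefix (unfold_word a0 h next) (size h) = h.
  by rewrite -[size h]addn0 prefix_unfold_word.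
exists (unfold_word a0 h next); split=> // j.
have [lt|le] := ltnP j (size h); last by rewrite unfold_wordE.
by apply: (consistent_prefix (n := size h)); rewrite ?hx.
Qed.

End Plays.

Lemma exists_card (T : finType) k : k <= #|T| -> exists B : {set T}, #|B| = k.
Proof.
move=> le; exists [set x in take k (enum T)].
rewrite cardsE (card_uniqP _) ?take_uniq ?enum_uniq //.
by rewrite size_take_min -cardE; apply/minn_idPl.
Qed.

(* A classical truth value, used to turn a property of sets of vertices into
   a finite set. *)
Definition holds (P : Prop) : bool := if excluded_middle_informative P then true else false.

Lemma holdsP (P : Prop) : holds P <-> P.
Proof. by rewrite /holds; case: excluded_middle_informative. Qed.

(* A
   position is summarised by the set of vertices where a path labelled by the
   moves so far may end; [win_sets r] collects the sets from which Alice wins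
   when the choice sequence still to be played is [r] followed by zeros. *)
Section Game.
Variables (A V : finType) (E : V -> A -> V -> bool) (X : (nat -> A) -> Prop).
Hypothesis HX : forall x, X x <-> path_labels E x.

Definition live (v : V) : Prop :=
  exists (x : nat -> A) (p : nat -> V), p 0 = v /\ forall i, E (p i) (x i) (p i.+1).

Definition live_set (S : {set V}) : Prop := exists2 v, v \in S & live v.

(* With only zeros left Bob alone chooses the word, so Alice wins iff some
   infinite path is still possible. *)
Definition win_tail : {set {set V}} := [set S | holds (live_set S)].

Definition win_step (c : nat) (Ws : {set {set V}}) : {set {set V}} :=
  [set S | [exists B : {set A},
     (#|B| == c.+1) && [forall b in B, succ_set E S b \in Ws]]].

Definition win_sets (r : seq nat) : {set {set V}} := foldr win_step win_tail r.

Lemma win_tailP S : S \in win_tail <-> live_set S.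
Proof. by rewrite inE holdsP. Qed.

Lemma win_stepP c Ws S : S \in win_step c Ws <->
  exists B : {set A}, #|B| = c.+1 /\ forall b, b \in B -> succ_set E S b \in Ws.
Proof.
rewrite inE; split=> [/existsP [B /andP [/eqP cB /forall_inP HB]]|[B [cB HB]]].
  by exists B.
by apply/existsP; exists B; rewrite cB eqxx; apply/forall_inP.
Qed.

Lemma live_path x p n : (forall i, E (p i) (x i) (p i.+1)) -> live (p n).
Proof.
move=> Hp; exists (fun i => x (n + i)), (fun i => p (n + i)).
by split=> [|i]; rewrite ?addn0 ?addnS.
Qed.

Lemma live_set_step S : live_set S -> exists a, live_set (succ_set E S a).
Proof.
move=> [v vS [x [p [p0 Hp]]]]; exists (x 0), (p 1); last exact: live_path.
by rewrite inE; apply/exists_inP; exists v; rewrite // -p0 Hp.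
Qed.

Let offer_elem (B : {set A}) c : #|B| = c.+1 -> exists b, b \in B.
Proof. by move=> cB; apply/set0Pn; rewrite -card_gt0 cB. Qed.

Lemma win_sets_nonempty r S : S \in win_sets r -> S != set0.
Proof.
elim: r S => [|c r IH] S /=.
  by move/win_tailP => [v vS _]; apply/set0Pn; exists v.
move/win_stepP => [B [/offer_elem [b bB] HB]].
by apply: contra_neq (IH _ (HB b bB)) => ->; exact: succ_set0.
Qed.

Lemma win_sets_legal r S : S \in win_sets r -> 0 < #|A| /\ all (fun c => c < #|A|) r.
Proof.
elim: r S => [|c r IH] S /=.
  by move/win_tailP => [v _ [x _]]; split=> //; apply/card_gt0P; exists (x 0).
move/win_stepP => [B [cB HB]]; have [b bB] := offer_elem cB.
have [-> ->] := IH _ (HB b bB); split=> //.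
by rewrite andbT -ltnS -cB ltnS max_card.
Qed.

Definition wins (s : seq A -> {set A}) : Prop := forall x, follows s x -> X x.

Lemma consistent_live (s : seq A -> {set A}) h :
  (forall h', 0 < #|s h'|) -> wins s -> consistent s h -> live_set (reach E h).
Proof.
move=> offers ws ch; have [x [hx fx]] := extend_play offers ch.
have /HX [p Hp] := ws x fx; exists (p (size h)); last exact: live_path.
have := (reach_prefix E x (size h) (p (size h))).2; rewrite hx; apply.
by exists p; split=> // i _.
Qed.

Let drop_mkseq (alpha : nat -> nat) N n : n < N ->
  drop n (mkseq alpha N) = alpha n :: drop n.+1 (mkseq alpha N).
Proof. by move=> lt; rewrite (drop_nth 0) ?size_mkseq // nth_mkseq. Qed.

(* A winning strategy keeps every consistent position winning for the
   choices still to come. *)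
Lemma W_win_sets alpha N : W X alpha -> setT \in win_sets (mkseq alpha N).
Proof.
move=> [_ [s [cs ws]]]; have offers h : 0 < #|s h| by rewrite cs.
suff inv n h : size h + n = N -> consistent s h ->
    reach E h \in win_sets (drop (size h) (mkseq alpha N)).
  by have := inv N [::] (add0n _) (consistent_nil s); rewrite drop0.
elim: n h => [|n IH] h e ch.
  rewrite addn0 in e; rewrite drop_oversize ?size_mkseq ?e //=.
  by apply/win_tailP; apply: consistent_live ch.
rewrite drop_mkseq; last by rewrite -e -addSnnS leq_addr.
apply/win_stepP.
exists (s h); split=> // b bh; rewrite -reach_rcons.
have := IH (rcons h b); rewrite size_rcons; apply; first by rewrite addSnnS.
exact/consistent_rcons.
Qed.

(* Conversely, when [alpha] vanishes from [N] on, Alice wins by always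
   offering letters that keep the position winning. *)
Lemma win_sets_W alpha N : (forall j, N <= j -> alpha j = 0) ->
  setT \in win_sets (mkseq alpha N) -> W X alpha.
Proof.
move=> alpha0 Hw; have [A_pos legal] := win_sets_legal Hw.
have bounded j : alpha j < #|A|.
  have [lt|le] := ltnP j N; last by rewrite alpha0.
  by move/allP: legal; apply; rewrite -[alpha j](nth_mkseq 0 alpha lt) mem_nth ?size_mkseq.
pose inv h := reach E h \in win_sets (drop (size h) (mkseq alpha N)).
pose good_offer h (B : {set A}) :=
  #|B| = (alpha (size h)).+1 /\ (inv h -> forall b, b \in B -> inv (rcons h b)).
have offer h : exists B, good_offer h B.
  have [ih|nih] := classic (inv h); last first.
    by have [B cB] := exists_card (bounded (size h)); exists B.
  have [lt|le] := ltnP (size h) N.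
    move: ih; rewrite /inv drop_mkseq // => /win_stepP [B [cB HB]].
    by exists B; split=> // _ b bB; rewrite /inv size_rcons reach_rcons; apply: HB.
  move: ih; rewrite /inv drop_oversize ?size_mkseq //.
  move=> /win_tailP /live_set_step [a Ha]; exists [set a]; split=> [|_ b /set1P ->].
    by rewrite cards1 alpha0.
  rewrite /inv size_rcons reach_rcons drop_oversize ?size_mkseq ?(leq_trans le) //.
  exact/win_tailP.
have [s Hs] := ClassicalEpsilon.choice good_offer offer.
split=> //; exists s; split=> [h|x fx]; first by case: (Hs h).
have inv_prefix n : inv (prefix x n).
  elim: n => [|n IH]; first by rewrite /inv /= drop0.
  by rewrite prefixS; apply: (proj2 (Hs _)) IH _ (fx n).
apply/HX; apply: konig => n; have := inv_prefix n.
by rewrite /inv size_prefix; exact: win_sets_nonempty.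
Qed.

End Game.

Lemma count_tuple (T : Type) d (t : d.-tuple T) (P : pred T) :
  count P t = #|[set i | P (tnth t i)]|.
Proof.
rewrite -[in LHS](map_tnth_enum t) count_map cardsE cardE /enum_mem -enumT.
by rewrite size_filter count_filter; apply: eq_count => i /=; rewrite andbT.
Qed.

(* A letter of [rep t] is a
   column of [d] bits ([true] for the digit 0, [false] for the padding #), and
   component [i] of [t] is the number of [true]s in row [i]. *)
Section Representation.
Variable d : nat.
Notation column := {ffun 'I_d -> bool}.

Definition empty_col : column := [ffun _ => false].
Definition ones (c : column) : nat := #|[set i | c i]|.

Definition next_col (p c : column) : bool :=
  [&& [exists i, c i], [forall i, p i ==> c i] &
      [forall i : 'I_d, forall i' : 'I_d, (i <= i') ==> c i ==> c i']].

Definition valid (w : seq column) : bool := path next_col empty_col w.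

Definition heights (w : seq column) : d.-tuple nat :=
  [tuple count (fun c : column => c i) w | i < d].

Definition stack (t : d.-tuple nat) (c : column) : d.-tuple nat :=
  [tuple tnth t i + c i | i < d].

(* The numbers of components of [heights w] equal to 1, 2, ..., [size w]:
   rows switched on by the last column have height 1, those switched on by
   the column before it height 2, and so on. *)
Definition level_counts (w : seq column) : seq nat :=
  rev (pairmap (fun a b => ones b - ones a) empty_col w).

Lemma next_colP (p c : column) : reflect
  [/\ exists i, c i, forall i, p i -> c i & forall i i' : 'I_d, i <= i' -> c i -> c i']
  (next_col p c).
Proof.
apply: (iffP and3P) => [[/existsP ex /forallP inc /forallP up]|[[i ci] inc up]].
  split=> // [i|i i' le ci]; first exact/implyP.
  by move/forallP: (up i) => /(_ i') /implyP /(_ le) /implyP; apply.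
split; first by apply/existsP; exists i.
  by apply/forallP => j; apply/implyP; apply: inc.
by apply/forallP => j; apply/forallP => j'; apply/implyP => le; apply/implyP; exact: up.
Qed.

Lemma valid_rcons w c : valid (rcons w c) = valid w && next_col (last empty_col w) c.
Proof. exact: rcons_path. Qed.

Lemma heights_nil : heights [::] = [tuple 0 | i < d].
Proof. by apply: eq_from_tnth => i; rewrite !tnth_mktuple. Qed.

Lemma heights_rcons w c : heights (rcons w c) = stack (heights w) c.
Proof.
by apply: eq_from_tnth => i; rewrite !tnth_mktuple -cats1 count_cat /= addn0.
Qed.

Lemma level_counts_rcons w c :
  level_counts (rcons w c) = (ones c - ones (last empty_col w)) :: level_counts w.
Proof. by rewrite /level_counts -cats1 pairmap_cat cats1 rev_rcons. Qed.

Lemma heights_le w i : tnth (heights w) i <= size w.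
Proof. by rewrite tnth_mktuple count_size. Qed.

Lemma heights_pos w : valid w -> forall i, (0 < tnth (heights w) i) = last empty_col w i.
Proof.
elim/last_ind: w => [|w c IH]; first by move=> _ i; rewrite heights_nil tnth_mktuple ffunE.
rewrite valid_rcons => /andP [vw /next_colP [_ inc _]] i.
rewrite heights_rcons tnth_mktuple last_rcons addn_gt0 IH //.
by case: (c i) (inc i); case: (last empty_col w i) => //= /(_ isT).
Qed.

Lemma heights_mono w : valid w ->
  forall i i' : 'I_d, i <= i' -> tnth (heights w) i <= tnth (heights w) i'.
Proof.
elim/last_ind: w => [|w c IH]; first by move=> _ i i' _; rewrite heights_nil !tnth_mktuple.
rewrite valid_rcons => /andP [vw /next_colP [_ _ up]] i i' le.
rewrite heights_rcons !tnth_mktuple leq_add //.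
  by have := IH vw _ _ le; rewrite !tnth_mktuple.
by case: (c i) (up i i' le) => [/(_ isT) ->|].
Qed.

Lemma sorted_of_mono (t : d.-tuple nat) :
  (forall i i' : 'I_d, i <= i' -> tnth t i <= tnth t i') -> sorted leq t.
Proof.
move=> mono; apply/(sortedP 0) => i; rewrite size_tuple => lt.
have lt' : i < d by exact: ltnW.
by rewrite -!(tnth_nth 0 t (Ordinal _)) ?mono.
Qed.

Lemma mono_of_sorted (t : d.-tuple nat) : sorted leq t ->
  forall i i' : 'I_d, i <= i' -> tnth t i <= tnth t i'.
Proof.
move=> st i i' le; rewrite !(tnth_nth 0).
by apply: (sorted_leq_nth leq_trans leqnn) => //; rewrite inE size_tuple.
Qed.

Section Stack.
Variables (t : d.-tuple nat) (c : column).
Hypotheses (c_cover : forall i, 0 < tnth t i -> c i) (c_nonempty : exists i, c i).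

Let tmax i : tnth t i <= \max_(i < d) tnth t i.
Proof. exact: (leq_bigmax (F := fun i => tnth t i)). Qed.

Lemma max_stack : \max_(i < d) tnth (stack t c) i = (\max_(i < d) tnth t i).+1.
Proof.
have [i0 ci0] := c_nonempty; apply/eqP; rewrite eqn_leq; apply/andP; split.
  apply/bigmax_leqP => i _; rewrite tnth_mktuple.
  by have := tmax i; case: (c i) => /=; lia.
have d_pos : 0 < #|'I_d| by apply/card_gt0P; exists i0.
have [j ->] := eq_bigmax (fun i => tnth t i) d_pos.
have [tj0|tj_pos] := posnP (tnth t j).
  have := leq_bigmax (F := fun i => tnth (stack t c) i) i0.
  by apply: leq_trans; rewrite tnth_mktuple ci0 tj0 addn1.
have := leq_bigmax (F := fun i => tnth (stack t c) i) j.
by apply: leq_trans; rewrite tnth_mktuple c_cover // addn1.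
Qed.

Lemma rep_stack : rep (stack t c) = rcons (rep t) c.
Proof.
rewrite /rep max_stack; set m := \max_(i < d) tnth t i.
have off i : ~~ c i -> tnth t i = 0.
  by move=> nci; apply/eqP; rewrite -leqn0 leqNgt; apply: contra nci; exact: c_cover.
rewrite -addn1 iotaD map_cat /= cats1 add0n; congr rcons.
  apply/eq_in_map => p; rewrite mem_iota add0n => /andP [_ lt]; apply/ffunP => i.
  rewrite !ffunE tnth_mktuple; case: (boolP (c i)) => [_|/off ->].
    by rewrite !addn1 subSS.
  by rewrite addn0 !subn0 addn1 ltnNge (ltnW lt) leqNgt lt.
apply/ffunP => i; rewrite !ffunE tnth_mktuple; case: (boolP (c i)) => [_|/off ->].
  by rewrite !addn1 subSS leq_subr.
by rewrite addn0 !subn0 addn1 ltnn.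
Qed.

End Stack.

Lemma rep_heights w : valid w -> rep (heights w) = w.
Proof.
elim/last_ind: w => [|w c IH].
  move=> _; rewrite heights_nil /rep.
  suff -> : \max_(i < d) tnth [tuple 0 | _ < d] i = 0 by [].
  by apply/eqP; rewrite -leqn0; apply/bigmax_leqP => i _; rewrite tnth_mktuple.
rewrite valid_rcons => /andP [vw /next_colP [ex inc _]].
rewrite heights_rcons rep_stack ?IH // => i; rewrite heights_pos //; exact: inc.
Qed.

Lemma rep_valid (t : d.-tuple nat) : sorted leq t -> valid (rep t) /\ heights (rep t) = t.
Proof.
move: {2}(\max_(i < d) tnth t i) (erefl (\max_(i < d) tnth t i)) => n.
elim: n t => [|n IH] t mx st.
  have t0 i : tnth t i = 0.
    by apply/eqP; rewrite -leqn0 -mx; exact: (leq_bigmax (F := fun i => tnth t i)).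
  have -> : rep t = [::] by rewrite /rep mx.
  by split=> //; apply: eq_from_tnth => i; rewrite heights_nil tnth_mktuple t0.
pose c : column := [ffun i => 0 < tnth t i].
pose t' : d.-tuple nat := [tuple (tnth t i).-1 | i < d].
have tE : t = stack t' c.
  apply: eq_from_tnth => i; rewrite !tnth_mktuple ffunE.
  by case: (tnth t i) => // k; rewrite addn1.
have c_cover i : 0 < tnth t' i -> c i by rewrite tnth_mktuple ffunE; lia.
have c_nonempty : exists i, c i.
  apply/existsP; apply: contraTT (ltn0Sn n) => /existsPn none.
  rewrite -mx -leqNgt; apply/bigmax_leqP => i _.
  by move: (none i); rewrite ffunE lt0n negbK => /eqP ->.
have st' : sorted leq t'.
  apply: sorted_of_mono => i i' le; rewrite !tnth_mktuple.
  by have := mono_of_sorted st le; lia.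
have mx' : \max_(i < d) tnth t' i = n.
  by apply/eq_add_S; rewrite -mx [in RHS]tE max_stack.
have [vr tr] := IH t' mx' st'.
rewrite tE rep_stack // valid_rcons vr heights_rcons tr; split=> //.
apply/next_colP; split=> // [i|i i' le]; first by rewrite -heights_pos // tr; apply: c_cover.
by rewrite !ffunE => ti; exact: leq_trans ti (mono_of_sorted st le).
Qed.

Lemma count_heights0 w : valid w -> count_mem 0 (heights w) = d - ones (last empty_col w).
Proof.
move=> vw; rewrite count_tuple /ones.
have -> : [set i | tnth (heights w) i == 0] = ~: [set i | last empty_col w i].
  by apply/setP => i; rewrite !inE -heights_pos // lt0n negbK.
by rewrite cardsCs setCK card_ord.
Qed.

Lemma count_heightsS w : valid w ->
  forall j, count_mem j.+1 (heights w) = nth 0 (level_counts w) j.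
Proof.
elim/last_ind: w => [|w c IH].
  move=> _ j; rewrite count_tuple nth_nil; apply/eqP; rewrite cards_eq0.
  by apply/eqP/setP => i; rewrite heights_nil !inE tnth_mktuple.
move=> vwc; have := vwc; rewrite valid_rcons => /andP [vw /next_colP [_ inc _]] j.
have step i : (tnth (heights (rcons w c)) i == j.+1) =
    if j is j'.+1 then tnth (heights w) i == j'.+1
    else c i && ~~ last empty_col w i.
  rewrite heights_rcons tnth_mktuple -heights_pos //; have := inc i; rewrite -heights_pos //.
  case: j => [|j']; case: (c i); case: (tnth (heights w) i) => //= k;
  by rewrite ?addn0 ?addn1 //= => /(_ isT).
rewrite level_counts_rcons count_tuple; case: j step => [|j] step /=.
  rewrite /ones -cardsDS; last by apply/subsetP => i; rewrite !inE; apply: inc.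
  by apply: eq_card => i; rewrite !inE step andbC.
by rewrite -IH // count_tuple; apply: eq_card => i; rewrite !inE step.
Qed.

Lemma count_heights_big w j : size w < j -> count_mem j (heights w) = 0.
Proof.
move=> lt; rewrite count_tuple; apply/eqP; rewrite cards_eq0; apply/eqP/setP => i.
by rewrite !inE; have := heights_le w i; case: eqP => // ->; lia.
Qed.

Lemma mkseq_count_heights w : valid w ->
  mkseq (fun j => count_mem j (heights w)) (size w).+1
  = (d - ones (last empty_col w)) :: level_counts w.
Proof.
move=> vw; apply: (@eq_from_nth _ 0).
  by rewrite size_mkseq /= /level_counts size_rev size_pairmap.
move=> i; rewrite size_mkseq => lt; rewrite nth_mkseq //.
by case: i lt => [|j] _ /=; [rewrite count_heights0 | rewrite count_heightsS].
Qed.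

End Representation.

Lemma sum_count_mem (s : seq nat) n :
  \sum_(i < n) count_mem (nat_of_ord i) s = count (fun x => x < n) s.
Proof.
elim: n => [|n IH].
  by rewrite big_ord0; apply/esym/eqP; rewrite -leqn0 leqNgt -has_count; apply/hasP => -[].
rewrite big_ord_recr /= IH -count_predUI.
rewrite (@eq_count _ (predI _ _) pred0) ?count_pred0 ?addn0; last by move=> x /=; case: ltngtP.
by apply: eq_count => x /=; rewrite ltnS; case: ltngtP.
Qed.

Lemma sum_le_counts d (t : d.-tuple nat) k :
  sum_le (fun j => count_mem j t) k <-> d <= k.
Proof.
split=> [|dk n]; last first.
  by rewrite sum_count_mem (leq_trans (count_size _ _)) // size_tuple.
move/(_ (\max_(i < d) tnth t i).+1); rewrite sum_count_mem.
suff -> : count (fun x => x < (\max_(i < d) tnth t i).+1) t = d by [].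
rewrite -[RHS](size_tuple t); apply/eqP; rewrite -all_count.
apply/allP => x /tnthP [i ->].
by rewrite ltnS (leq_bigmax (F := fun i => tnth t i)).
Qed.

(* A finite automaton recognising, for fixed [k] and [d], the representations
   of the tuples [nu(y)] with [y] in [W(X)] and [sum y <= k].  It checks that
   the word is the representation of a nondecreasing tuple and runs the game
   solution [win_step] on the multiplicities [level_counts] read off the
   column sizes; the state [None] is a rejecting sink. *)
Section Automaton.
Variables (A V : finType) (E : V -> A -> V -> bool) (X : (nat -> A) -> Prop).
Hypothesis HX : forall x, X x <-> path_labels E x.
Variables (k d : nat).
Notation column := {ffun 'I_d -> bool}.

Definition state := option ({set {set V}} * column)%type.

Definition start : state := Some (win_tail E, empty_col d).

Definition trans (q : state) (c : column) : state :=
  if q is Some (Ws, p) then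
    if next_col p c then Some (win_step E (ones c - ones p) Ws, c) else None
  else None.

Definition accepting : {set state} :=
  [set q | if q is Some (Ws, p) then (d <= k) && (setT \in win_step E (d - ones p) Ws)
           else false].

Lemma run (w : seq column) : foldl trans start w =
  if valid w then Some (win_sets E (level_counts w), last (empty_col d) w) else None.
Proof.
elim/last_ind: w => [//|w c IH].
rewrite foldl_rcons IH valid_rcons level_counts_rcons last_rcons.
by case: (valid w) => //=; case: next_col.
Qed.

Lemma W_heights (w : seq column) (y : nat -> nat) : valid w ->
  (forall j, y j = count_mem j (heights w)) ->
  W X y <->
  setT \in win_step E (d - ones (last (empty_col d) w)) (win_sets E (level_counts w)).
Proof.
move=> vw yE; rewrite -[win_step _ _ _]/(win_sets E (_ :: _)) -mkseq_count_heights //.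
rewrite -(eq_mkseq yE); split=> [Wy|]; first by have := W_win_sets HX (size w).+1 Wy.
by apply: (win_sets_W HX) => j lt; rewrite yE count_heights_big.
Qed.

Lemma accepted_iff (w : seq column) :
  (exists t, (exists y, W X y /\ sum_le y k /\ is_nu y t) /\ rep t = w) <->
  valid w /\ d <= k /\
  setT \in win_step E (d - ones (last (empty_col d) w)) (win_sets E (level_counts w)).
Proof.
split=> [[t [[y [Wy [sy [st yE]]]] tw]]|[vw [dk Hw]]].
  have [vw tE] := rep_valid st; rewrite tw in vw tE; subst t.
  split=> //; split; last exact/(W_heights vw yE).
  apply/(sum_le_counts (heights w)) => n.
  by rewrite (eq_bigr (fun i : 'I_n => y i)) => [|i _]; [exact: sy | rewrite yE].
exists (heights w); split; last exact: rep_heights.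
exists (fun j => count_mem j (heights w)); split; first exact/(W_heights vw).
split; first exact/sum_le_counts.
by split=> //; apply: sorted_of_mono; exact: heights_mono.
Qed.

End Automaton.

Lemma weakly_codable_sofic (A V : finType) (E : V -> A -> V -> bool)
    (X : (nat -> A) -> Prop) :
  (forall x, X x <-> path_labels E x) -> weakly_1_codable (W X).
Proof.
move=> HX k d; exists (state V d), (start E d), (@trans _ _ E d), (accepting E k d) => w.
rewrite (accepted_iff HX) run [_ \in accepting _ _ _]inE.
case: (valid w) => /=; last by split=> // -[].
by split=> [[_ [-> ->]] | /andP []].
Qed.

Lemma cantor_diagonal (T : Type) (enc : (nat -> bool) -> T)
    (dec : T -> nat -> bool) (f : nat -> T) :
  (forall bs i, dec (enc bs) i = bs i) -> ~ (forall bs, exists n, f n = enc bs).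
Proof.
move=> encK cover; have [m fm] := cover (fun i => ~~ dec (f i) i).
by have := encK (fun i => ~~ dec (f i) i) m; rewrite -fm; case: (dec (f m) m).
Qed.

(* Pumping in a sofic shift: two distinct words of the same length that both
   lead from the reachable set of [h0] back to it can be concatenated in
   any order, giving uncountably many elements of [X]. *)
Section Pumping.
Variables (A V : finType) (E : V -> A -> V -> bool) (X : (nat -> A) -> Prop).
Hypothesis HX : forall x, X x <-> path_labels E x.
Variables (h0 u v : seq A).
Hypotheses (h0_live : reach E h0 != set0)
  (u_loop : reach E (h0 ++ u) = reach E h0) (v_loop : reach E (h0 ++ v) = reach E h0)
  (uv_size : size u = size v) (u_neq_v : u != v).

Let block (b : bool) : seq A := if b then u else v.

Let pumped (bs : nat -> bool) (k : nat) : seq A :=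
  h0 ++ flatten (mkseq (fun i => block (bs i)) k).

Let pumpedS bs k : pumped bs k.+1 = pumped bs k ++ block (bs k).
Proof. by rewrite /pumped mkseqS flatten_rcons catA. Qed.

Let size_pumped bs k : size (pumped bs k) = size h0 + k * size u.
Proof.
elim: k => [|k IH]; first by rewrite /pumped /= cats0 addn0.
by rewrite pumpedS size_cat IH mulSn; case: (bs k) => /=; rewrite -?uv_size; lia.
Qed.

Let reach_pumped bs k : reach E (pumped bs k) = reach E h0.
Proof.
elim: k => [|k IH]; first by rewrite /pumped /= cats0.
by rewrite pumpedS reach_cat IH -reach_cat; case: (bs k).
Qed.

Lemma pumping_uncountable : ~ countable_set X.
Proof.
have [a0 _] : exists a0 : A, True.
  by case: u uv_size u_neq_v => [|a ?]; [case: v | exists a].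
have [i0 lt_i0 differ] : exists2 i0, i0 < size u & nth a0 u i0 != nth a0 v i0.
  apply: NNPP => agree; move/negP: u_neq_v; apply; apply/eqP.
  apply: (eq_from_nth (x0 := a0) uv_size) => i lt.
  by apply: NNPP => ne; apply: agree; exists i => //; exact/eqP.
have ext bs k : exists l, pumped bs k.+1 = pumped bs k ++ l by exists (block (bs k)).
have long bs k : k <= size (pumped bs k).
  by rewrite size_pumped (leq_trans _ (leq_addl _ _)) // leq_pmulr // (leq_ltn_trans _ lt_i0).
pose word bs := chain_limit a0 (pumped bs).
have word_in_X bs : X (word bs).
  apply/HX; apply: konig => n; rewrite (@prefix_chain_limit _ a0 _ (ext bs) (long bs) n) //.
  by apply: reach_take; rewrite reach_pumped.
pose dec (x : nat -> A) i := x (size h0 + i * size u + i0) == nth a0 u i0.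
have decK bs i : dec (word bs) i = bs i.
  rewrite /dec /word (@chain_limitE _ a0 _ (ext bs) (long bs) i.+1) //; last first.
    by rewrite size_pumped mulSn; lia.
  rewrite pumpedS nth_cat size_pumped ltnNge leq_addr /= addKn.
  by case: (bs i); rewrite /= ?eqxx // eq_sym (negbTE differ).
move=> [f cover]; apply: (cantor_diagonal decK) => bs.
exact: cover (word_in_X bs).
Qed.

End Pumping.

Section Branching.
Variables (A V : finType) (E : V -> A -> V -> bool) (X : (nat -> A) -> Prop).
Hypothesis HX : forall x, X x <-> path_labels E x.
Variables (s : seq A -> {set A}) (y : nat -> nat).
Hypothesis s_card : forall h, #|s h| = (y (size h)).+1.

Let offers h : 0 < #|s h|.
Proof. by rewrite s_card. Qed.

Definition branching_loops : Prop :=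
  exists h0 p a b u v, [/\ a != b,
    consistent s (h0 ++ p ++ a :: u), consistent s (h0 ++ p ++ b :: v),
    reach E (h0 ++ p ++ a :: u) = reach E h0 & reach E (h0 ++ p ++ b :: v) = reach E h0].

Lemma branch_point h j : consistent s h -> size h <= j -> 0 < y j ->
  exists p a b, [/\ size (h ++ p) = j, consistent s (h ++ p),
    a \in s (h ++ p), b \in s (h ++ p) & a != b].
Proof.
move=> ch hj yj; have [x [hx fx]] := extend_play offers ch.
pose p := [seq x i | i <- iota (size h) (j - size h)].
have pE : prefix x j = h ++ p.
  by rewrite /prefix -(subnKC hj) iotaD map_cat add0n -/(prefix x (size h)) hx.
have [a [b [ah bh ab]]] : exists a b, [/\ a \in s (h ++ p), b \in s (h ++ p) & a != b].
  by apply/card_gt1P; rewrite s_card -pE size_prefix ltnS.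
exists p, a, b; rewrite -pE in ah bh *.
by rewrite size_prefix; split=> //; exact: follows_prefix.
Qed.

(* The pigeonhole on reachable sets.  [C] contains the reachable sets of all
   consistent extensions of [h] of length at most [n], and [js] lists more
   than [#|C|] later rounds before [n] with a genuine choice.  At the first
   of them one of two offered letters never returns to [reach E h] (else the
   loops are found), which removes [reach E h] from [C] for the next round. *)
Lemma branching_from_choices n K : forall (C : {set {set V}}) h js,
  #|C| <= K -> K < size js -> consistent s h -> sorted ltn js ->
  all (fun j => [&& size h <= j, j < n & 0 < y j]) js ->
  (forall u, consistent s (h ++ u) -> size (h ++ u) <= n -> reach E (h ++ u) \in C) ->
  branching_loops.
Proof.
elim: K => [|K IH] C h [//|j js] cC ljs ch sjs ajs C_closed.
all: have /and3P [hj jn yj] := allP ajs j (mem_head _ _).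
all: have hC : reach E h \in C
  by rewrite -[h]cats0; apply: C_closed; rewrite ?cats0 ?(leq_trans hj (ltnW jn)).
  by move: cC; rewrite leqn0 cards_eq0 => /eqP C0; rewrite C0 inE in hC.
have [p [a [b [hp_size chp ah bh ab]]]] := branch_point ch hj yj.
pose returns c := exists w, [/\ consistent s (h ++ p ++ c :: w),
  size (h ++ p ++ c :: w) <= n & reach E (h ++ p ++ c :: w) = reach E h].
have recurse c : c \in s (h ++ p) -> ~ returns c -> branching_loops.
  move=> cs no_return; apply: (IH (C :\ reach E h) (rcons (h ++ p) c) js) => //.
  - by move: cC; rewrite (cardsD1 (reach E h)) hC add1n ltnS.
  - exact/consistent_rcons.
  - exact: path_sorted sjs.
  - apply/allP => j' j'js; rewrite size_rcons hp_size.
    have /and3P [_ -> ->] : [&& size h <= j', j' < n & 0 < y j'].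
      by apply: (allP ajs); rewrite inE j'js orbT.
    by rewrite !andbT; have /allP := order_path_min ltn_trans sjs; apply.
  move=> u; rewrite -cats1 -!catA /= => cu su; rewrite !inE C_closed // andbT.
  by apply/eqP => back; apply: no_return; exists u.
have [[wa [ca _ ra]]|] := classic (returns a); last exact: recurse.
have [[wb [cb _ rb]]|] := classic (returns b); last exact: recurse.
by exists h, p, a, b, wa, wb.
Qed.

Lemma branching_uncountable : wins X s -> branching_loops -> ~ countable_set X.
Proof.
move=> ws [h0 [p [a [b [u [v [ab cu cv ru rv]]]]]]].
have [w0 w0h0 _] := consistent_live HX offers ws (consistent_cat cu).
have loop l l' : reach E (h0 ++ l) = reach E h0 -> reach E (h0 ++ l') = reach E h0 ->
    reach E (h0 ++ (l ++ l')) = reach E h0.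
  by move=> rl rl'; rewrite catA reach_cat rl -reach_cat rl'.
apply: (pumping_uncountable HX (h0 := h0) (u := (p ++ a :: u) ++ p ++ b :: v)
  (v := (p ++ b :: v) ++ p ++ a :: u)).
- by apply/set0Pn; exists w0.
- by rewrite loop.
- by rewrite loop.
- by rewrite !size_cat addnC.
by rewrite -!catA !cat_cons eqseq_cat //= eqxx /= eqseq_cons (negbTE ab).
Qed.

End Branching.

Lemma sum_le_support (y : nat -> nat) m n : (forall j, y j <= m) ->
  \sum_(i < n) y i <= m * count (fun j => 0 < y j) (iota 0 n).
Proof.
move=> bounded; elim: n => [|n IH]; first by rewrite big_ord0.
have -> : iota 0 n.+1 = iota 0 n ++ [:: n] by rewrite -addn1 iotaD.
rewrite big_ord_recr count_cat mulnDr leq_add //= addn0.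
by have [->|_] := posnP (y n); rewrite ?muln1.
Qed.

Lemma finite_dimension_countable (A V : finType) (E : V -> A -> V -> bool)
    (X : (nat -> A) -> Prop) :
  (forall x, X x <-> path_labels E x) -> countable_set X ->
  finite_coding_dimension (W X).
Proof.
move=> HX cX; exists (#|A| * #|{set V}|) => y [bounded [s [s_card ws]]] n.
rewrite leqNgt; apply/negP => too_big.
pose js := [seq j <- iota 0 n | 0 < y j].
have many : #|{set V}| < size js.
  have := leq_trans too_big (sum_le_support n (fun j => ltnW (bounded j))).
  by rewrite size_filter ltn_mul2l => /andP [].
apply: (branching_uncountable HX s_card ws _ cX).
apply: (branching_from_choices s_card (n := n) (C := setT) (h := [::]) _ many) => //.
- by rewrite cardsT.
- exact: consistent_nil.
- by apply: sorted_filter; [exact: ltn_trans | exact: iota_ltn_sorted].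
- by apply/allP => j; rewrite mem_filter mem_iota => /andP [-> /andP [_ ->]].
by move=> *; rewrite inE.
Qed.

Theorem mainTheorem15 (A : finType) (X : (nat -> A) -> Prop) :
  sofic X ->
  weakly_1_codable (W X) /\ (countable_set X -> one_codable (W X)).
Proof.
move=> [V [E HX]]; have weak := weakly_codable_sofic HX.
by split=> // cX; split=> //; exact: finite_dimension_countable HX cX.
Qed.
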